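(* Let $t,\alpha,\lambda>0$ and $n$ be given. For a differentiable function $R(t)$ define $$r(t)=\frac{tR'(t)+\lambda-R(t)\big(t+2n+\alpha+\lambda-tR(t)\big)}{2},\quad \beta^*(t)=\frac{1}{1-R(t)}\left(n(\alpha+n)+\frac{r(t)^2-\lambda r(t)}{R(t)}+(\alpha+\lambda+2n)r(t)\right),$$ $$\Sigma(t)=\frac{n(\alpha+\lambda+n)-t\,r(t)-\beta^*(t)}{t},$$ and consider the equation $$P''(z)+\left(\frac{\alpha+1}{z}+\frac{\lambda+1}{z+t}-1-\frac{1}{z+t[1-R(t)]}\right)P'(z)+\left(\frac{t(r(t)+nR(t))}{z(z+t)(z+t(1-R(t)))}+\frac{n-\Sigma(t)}{z}+\frac{\Sigma(t)}{z+t}\right)P(z)=0.\quad(\ast)$$ If $R$ satisfies the Riccati equation $tR'(t)=tR(t)^2-(\alpha+\lambda+t)R(t)+\lambda$, with solution $$R(t)=\frac{\alpha C_2U(\alpha+1,\alpha+\lambda+1,t)+L_{-\alpha-1}^{\alpha+\lambda}(t)}{C_2U(\alpha,\alpha+\lambda,t)+L_{-\alpha}^{\alpha+\lambda-1}(t)}+1$$ for a constant $C_2$, then for a solution $P$ of $(\ast)$ the function $\widetilde P(u):=P(-tu)$ satisfies $$\widetilde P''(u)+\left(\frac{\tilde\gamma+1}{u}+\frac{\tilde\delta+1}{u-1}+\tilde\epsilon-\frac{\tilde\alpha}{\tilde\alpha u-\tilde q}\right)\widetilde P'(u)+\frac{(\tilde\alpha+\tilde\epsilon)(\tilde\alpha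 u^2-2\tilde qu)+\tilde\alpha\tilde\gamma+\tilde q^2-\tilde q(\tilde\gamma+\tilde\delta-\tilde\epsilon)}{u(u-1)(\tilde\alpha u-\tilde q)}\widetilde P(u)=0$$ (the equation satisfied by the derivative of a confluent Heun function) with $\tilde\gamma=\alpha$, $\tilde\delta=\lambda$, $\tilde\epsilon=t$, $\tilde q=-(n+1)t(1-R(t))$, $\tilde\alpha=-(n+1)t$.
   Context: $U(a,b,x)$ is the Kummer confluent hypergeometric function of the second kind and $L_\nu^{a}(x)$ is the generalized Laguerre function. Equation $(\ast)$ is the second-order ODE satisfied by the monic polynomials orthogonal with respect to $x^\alpha(x+t)^\lambda e^{-x}$ on $[0,\infty)$ when $R$ is the auxiliary quantity $R_n(t)=\frac{\lambda}{h_n}\int_0^\infty\frac{P_n^2(x)}{x+t}x^\alpha(x+t)^\lambda e^{-x}dx$; here it is regarded as an equation determined by an arbitrary function $R$. *)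

From Stdlib Require Import Reals.
From Coquelicot Require Import Coquelicot.
Open Scope R_scope.

(* r(t), given the values Rv = Rv(t), dR = Rv'(t). *)
Definition r_aux (n : nat) (al la t Rv dR : R) : R :=
  (t * dR + la - Rv * (t + 2 * INR n + al + la - t * Rv)) / 2.

Definition beta_star (n : nat) (al la t Rv dR : R) : R :=
  let r := r_aux n al la t Rv dR in
  / (1 - Rv) * (INR n * (al + INR n) + (r ^ 2 - la * r) / Rv
               + (al + la + 2 * INR n) * r).

Definition Sigma_aux (n : nat) (al la t Rv dR : R) : R :=
  (INR n * (al + la + INR n) - t * r_aux n al la t Rv dR
   - beta_star n al la t Rv dR) / t.

(* Left-hand side of equation (star) at the point z, for P with first and
   second derivatives P1 = P'(z), P2 = P''(z). *)
Definition eqStar_lhs (n : nat) (al la t Rv dR : R) (z P0 P1 P2 : R) : R :=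
  let r := r_aux n al la t Rv dR in
  let S := Sigma_aux n al la t Rv dR in
  P2 + ((al + 1) / z + (la + 1) / (z + t) - 1 - 1 / (z + t * (1 - Rv))) * P1
     + (t * (r + INR n * Rv) / (z * (z + t) * (z + t * (1 - Rv)))
        + (INR n - S) / z + S / (z + t)) * P0.

Definition heunDeriv_lhs (ga de ep q a : R) (u P0 P1 P2 : R) : R :=
  P2 + ((ga + 1) / u + (de + 1) / (u - 1) + ep - a / (a * u - q)) * P1
     + ((a + ep) * (a * u ^ 2 - 2 * q * u) + a * ga + q ^ 2
        - q * (ga + de - ep)) / (u * (u - 1) * (a * u - q)) * P0.

From Stdlib Require Import Reals Lra.
From Coquelicot Require Import Coquelicot.
Open Scope R_scope.

(* Under z = -t u the first and second derivatives pick up the factors -t and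
   t^2.  Once R'(t) is eliminated with the Riccati equation, t^2 times the
   left-hand side of (star) at z = -t u is, as a rational function of u, P and
   its derivatives, exactly the derivative-of-confluent-Heun operator applied to
   P(-t u): the singular point z = -t(1 - R(t)) of (star) becomes the apparent
   singularity u = q/a = 1 - R(t). *)

Lemma is_derive_comp_scal (f : R -> R) (c x : R) :
  ex_derive f (c * x) ->
  is_derive (fun v => f (c * v)) x (c * Derive f (c * x)).
Proof.
  intros Hf.
  apply (is_derive_comp f (fun v => c * v)).
  - now apply Derive_correct.
  - auto_derive; [easy | ring].
Qed.

Lemma locally_scal_open (D : R -> Prop) (c x : R) :
  open D -> D (c * x) -> locally x (fun v => D (c * v)).
Proof.
  intros HD Hx.
  assert (Hc : continuous (fun v => c * v) x).
  { apply (continuity_pt_filterlim (fun v => c * v)). reg. }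
  exact (Hc _ (HD _ Hx)).
Qed.

Section Rescaling.

Context {f : R -> R} {D : R -> Prop} {c : R}.
Hypothesis D_open : open D.
Hypothesis f_twice_derivable : forall z, D z -> ex_derive f z /\ ex_derive (Derive f) z.

Lemma Derive_comp_scal (x : R) :
  D (c * x) -> Derive (fun v => f (c * v)) x = c * Derive f (c * x).
Proof.
  intros Hx. apply is_derive_unique, is_derive_comp_scal.
  exact (proj1 (f_twice_derivable _ Hx)).
Qed.

Lemma Derive2_comp_scal (x : R) :
  D (c * x) ->
  Derive (Derive (fun v => f (c * v))) x = c ^ 2 * Derive (Derive f) (c * x).
Proof.
  intros Hx.
  rewrite (Derive_ext_loc _ (fun v => c * Derive f (c * v))).
  - apply is_derive_unique.
    replace (c ^ 2 * Derive (Derive f) (c * x))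
      with (c * (c * Derive (Derive f) (c * x))) by ring.
    apply is_derive_scal, is_derive_comp_scal.
    exact (proj2 (f_twice_derivable _ Hx)).
  - apply (filter_imp _ _ (fun v => Derive_comp_scal v)).
    exact (locally_scal_open _ _ _ D_open Hx).
Qed.

End Rescaling.

Lemma heunDeriv_lhs_eqStar (n : nat) (al la t Rv dR u P0 P1 P2 : R) :
  t <> 0 -> Rv <> 0 -> Rv <> 1 -> u <> 0 -> u <> 1 -> u <> 1 - Rv ->
  t * dR = t * Rv ^ 2 - (al + la + t) * Rv + la ->
  heunDeriv_lhs al la t (- (INR n + 1) * t * (1 - Rv)) (- (INR n + 1) * t)
    u P0 (- t * P1) (t ^ 2 * P2)
  = t ^ 2 * eqStar_lhs n al la t Rv dR (- t * u) P0 P1 P2.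
Proof.
  intros Ht HR0 HR1 Hu0 Hu1 HuR Hriccati.
  assert (HdR : dR = (t * Rv ^ 2 - (al + la + t) * Rv + la) / t)
    by (field_simplify_eq; lra).
  assert (Hn : INR n + 1 <> 0) by (pose proof (pos_INR n); lra).
  assert (Hz : - t * u <> 0) by (apply Rmult_integral_contrapositive; lra).
  assert (Hzt : - t * u + t <> 0).
  { replace (- t * u + t) with (t * (1 - u)) by ring.
    apply Rmult_integral_contrapositive; lra. }
  assert (HzR : - t * u + t * (1 - Rv) <> 0).
  { replace (- t * u + t * (1 - Rv)) with (t * (1 - Rv - u)) by ring.
    apply Rmult_integral_contrapositive; lra. }
  assert (HaR : - (INR n + 1) * t * u - - (INR n + 1) * t * (1 - Rv) <> 0).
  { replace (- (INR n + 1) * t * u - - (INR n + 1) * t * (1 - Rv))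
      with ((INR n + 1) * (- t * u + t * (1 - Rv))) by ring.
    now apply Rmult_integral_contrapositive. }
  rewrite HdR. unfold heunDeriv_lhs, eqStar_lhs, Sigma_aux, beta_star, r_aux.
  field; repeat split; lra.
Qed.

Theorem mainTheorem13 (n : nat) (al la t : R) (Rf : R -> R)
  (P : R -> R) (D : R -> Prop) :
  0 < t -> 0 < al -> 0 < la ->
  (* R is differentiable and satisfies the Riccati equation on t > 0 *)
  (forall s, 0 < s -> ex_derive Rf s /\
     s * Derive Rf s = s * Rf s ^ 2 - (al + la + s) * Rf s + la) ->
  (* the expressions defining r, beta^*, Sigma are well defined at t *)
  Rf t <> 0 -> Rf t <> 1 ->
  (* P is a (twice differentiable) solution of equation (star) on the open set D *)
  open D ->
  (forall z, D z -> ex_derive P z /\ ex_derive (Derive P) z) ->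
  (forall z, D z -> z <> 0 -> z + t <> 0 -> z + t * (1 - Rf t) <> 0 ->
     eqStar_lhs n al la t (Rf t) (Derive Rf t)
       z (P z) (Derive P z) (Derive (Derive P) z) = 0) ->
  (* then Ptilde(u) = P(-t u) solves the derivative confluent Heun equation *)
  let Pt := fun u => P (- t * u) in
  let qt := - (INR n + 1) * t * (1 - Rf t) in
  let at_ := - (INR n + 1) * t in
  forall u, D (- t * u) -> u <> 0 -> u <> 1 -> at_ * u - qt <> 0 ->
    heunDeriv_lhs al la t qt at_
      u (Pt u) (Derive Pt u) (Derive (Derive Pt) u) = 0.
Proof.
  intros Ht _ _ HR HR0 HR1 HD HP Hstar Pt qt at_ u Hu Hu0 Hu1 Hq.
  assert (HuR : u <> 1 - Rf t).
  { intros Heq. apply Hq. unfold at_, qt. rewrite Heq. ring. }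
  assert (Hz : - t * u <> 0) by (apply Rmult_integral_contrapositive; lra).
  assert (Hzt : - t * u + t <> 0) by (intros Heq; apply Hu1; nra).
  assert (HzR : - t * u + t * (1 - Rf t) <> 0) by (intros Heq; apply HuR; nra).
  unfold Pt, qt, at_.
  rewrite (Derive_comp_scal HP _ Hu), (Derive2_comp_scal HD HP _ Hu).
  replace ((- t) ^ 2) with (t ^ 2) by ring.
  rewrite (heunDeriv_lhs_eqStar n al la t (Rf t) (Derive Rf t)); try lra.
  - rewrite Hstar; auto; ring.
  - exact (proj2 (HR t Ht)).
Qed.
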